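(* Let $P$ be a negative-stable standard TSS in decent ntytt format. Then every standard ntytt rule irredundantly provable from $P$ is negative-stable.
   Context: Actions $A\cup\{\tau\}$, $\tau\notin A$. Literals $t\xrightarrow{\alpha}u$ (positive) and $t\not\xrightarrow{\alpha}$ (negative) over terms of a signature $\Sigma$ with infinite variable set $V$. A rule $\frac{H}{\lambda}$ has premises $H$ and conclusion $\lambda$ (source = left term of $\lambda$); it is standard if $\lambda$ is positive; a TSS is standard if all its rules are. Irredundant proof of $\frac{H}{\lambda}$ from $P$: well-founded tree of literals, some leaves marked hypothesis, root $\lambda$, $H$ exactly the hypothesis labels, every non-hypothesis node $\mu$ with children labels $K$ such that $\frac{K}{\mu}$ is a substitution instance of a rule of $P$. ntytt rule: right-hand sides of positive premises are distinct variables not occurring in the source. Free variable: occurs neither in source nor in premise right-hand sides; lookahead: a variable occurs in a premise right-hand side and in a premise left-hand side; decent: no lookahead and no free variables. A standard rule $\frac{H}{t\xrightarrow{\alpha}u}$ is negative-stable if for every premise $w\not\xrightarrow{\gamma}$ in $H$, also $w\not\xrightarrow{\tau}$ is in $H$; a TSS is negative-stable if all its rules are. *)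

From Stdlib Require Import List Fin.
Set Implicit Arguments.

Section TSS.

(* Signature: function symbols F with arities; variables V; actions A.
   Labels are [option A], with [None] playing the role of tau (tau not in A). *)
Context (F : Type) (arity : F -> nat) (V : Type) (A : Type).

Definition label := option A.
Definition tau : label := None.

Inductive term : Type :=
| Var : V -> term
| App : forall f : F, (Fin.t (arity f) -> term) -> term.


Inductive occurs (x : V) : term -> Prop :=
| occ_var : occurs x (Var x)
| occ_app : forall f (c : Fin.t (arity f) -> term) i,
    occurs x (c i) -> occurs x (@App f c).

Fixpoint subst (s : V -> term) (t : term) : term :=
  match t with
  | Var x => s x
  | @App f c => @App f (fun i => subst s (c i))
  end.

(* positive literal t -a-> u, negative literal t -/a-> *)
Inductive literal : Type :=
| Pos : term -> label -> term -> literal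
| Neg : term -> label -> literal.

Definition subst_lit (s : V -> term) (l : literal) : literal :=
  match l with
  | Pos t a u => Pos (subst s t) a (subst s u)
  | Neg t a => Neg (subst s t) a
  end.

Definition lhs (l : literal) : term :=
  match l with Pos t _ _ => t | Neg t _ => t end.

(* A rule H / lambda; premises form a (possibly infinite) set. *)
Record rule : Type := mkRule { prem : literal -> Prop; concl : literal }.

Definition TSS := rule -> Prop.

Definition source (r : rule) : term := lhs (concl r).

Definition standard_rule (r : rule) : Prop :=
  exists t a u, concl r = Pos t a u.

Definition standard_TSS (P : TSS) : Prop :=
  forall r, P r -> standard_rule r.

Definition rule_instance (P : TSS) (K : literal -> Prop) (mu : literal) : Prop :=
  exists r, P r /\ exists s : V -> term,
    mu = subst_lit s (concl r) /\
    (forall k, K k <-> exists h, prem r h /\ k = subst_lit s h).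

Inductive ptree : Type :=
| HypLeaf : literal -> ptree
| Node : literal -> forall I : Type, (I -> ptree) -> ptree.

Definition root (t : ptree) : literal :=
  match t with HypLeaf l => l | @Node l _ _ => l end.

Inductive valid_proof (P : TSS) : ptree -> Prop :=
| vp_hyp : forall l, valid_proof P (HypLeaf l)
| vp_node : forall l (I : Type) (ch : I -> ptree),
    (forall i, valid_proof P (ch i)) ->
    rule_instance P (fun k => exists i, root (ch i) = k) l ->
    valid_proof P (Node l ch).

Inductive hyp_label : ptree -> literal -> Prop :=
| hl_leaf : forall l, hyp_label (HypLeaf l) l
| hl_node : forall l (I : Type) (ch : I -> ptree) i k,
    hyp_label (ch i) k -> hyp_label (Node l ch) k.

Definition irredundantly_provable (P : TSS) (r : rule) : Prop :=
  exists pt : ptree, valid_proof P pt /\ root pt = concl r /\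
    (forall l, prem r l <-> hyp_label pt l).

Definition ntytt_rule (r : rule) : Prop :=
  (forall t a u, prem r (Pos t a u) ->
     exists y, u = Var y /\ ~ occurs y (source r)) /\
  (forall t1 a1 t2 a2 y, prem r (Pos t1 a1 (Var y)) -> prem r (Pos t2 a2 (Var y)) ->
     t1 = t2 /\ a1 = a2).

Definition rhs_var (r : rule) (y : V) : Prop :=
  exists t a, prem r (Pos t a (Var y)).

Definition occurs_lit (x : V) (l : literal) : Prop :=
  match l with
  | Pos t _ u => occurs x t \/ occurs x u
  | Neg t _ => occurs x t
  end.

Definition occurs_rule (x : V) (r : rule) : Prop :=
  occurs_lit x (concl r) \/ exists h, prem r h /\ occurs_lit x h.

Definition has_free_var (r : rule) : Prop :=
  exists x, occurs_rule x r /\ ~ occurs x (source r) /\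
    ~ (exists t a u, prem r (Pos t a u) /\ occurs x u).

Definition has_lookahead (r : rule) : Prop :=
  exists x, (exists t a u, prem r (Pos t a u) /\ occurs x u) /\
            (exists h, prem r h /\ occurs x (lhs h)).

Definition decent_rule (r : rule) : Prop :=
  ~ has_lookahead r /\ ~ has_free_var r.

Definition decent_ntytt_TSS (P : TSS) : Prop :=
  forall r, P r -> ntytt_rule r /\ decent_rule r.

Definition negative_stable_rule (r : rule) : Prop :=
  standard_rule r /\
  forall w g, prem r (Neg w g) -> prem r (Neg w tau).

Definition negative_stable_TSS (P : TSS) : Prop :=
  forall r, P r -> negative_stable_rule r.

End TSS.

From Stdlib Require Import List.

(* Standard rules only derive positive literals, so in a proof tree a node
   labelled by a negative literal must be a hypothesis leaf.  If a hypothesis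
   leaf [w -/g->] sits below a node, the rule instance used at that node has
   [w -/g->] among its premises; negative stability of that rule adds
   [w -/tau->] to the premises, i.e. some sibling is labelled [w -/tau->], and
   that sibling is again a hypothesis leaf.  The root itself is positive, so
   every negative hypothesis of the proved rule comes with its tau-version. *)

Section NegativeStability.

Variables (F : Type) (arity : F -> nat) (V : Type) (A : Type).
Variable P : TSS arity V A.
Hypothesis P_standard : standard_TSS P.
Hypothesis P_negative_stable : negative_stable_TSS P.

Lemma valid_proof_NodeP {l : literal arity V A} {I : Type}
    {ch : I -> ptree arity V A} :
  valid_proof P (Node l ch) ->
  (forall i, valid_proof P (ch i)) /\
  rule_instance P (fun k => exists i, root (ch i) = k) l.
Proof.
  intros Hv; change (match Node l ch with
    | HypLeaf _ => True
    | Node l ch => (forall i, valid_proof P (ch i)) /\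
                   rule_instance P (fun k => exists i, root (ch i) = k) l
    end).
  destruct Hv; auto.
Qed.

Lemma standard_rule_instance_Pos {K : literal arity V A -> Prop} {l} :
  rule_instance P K l -> exists t a u, l = Pos t a u.
Proof.
  intros [r [Pr [s [-> _]]]].
  destruct (P_standard r Pr) as [t [a [u ->]]].
  now exists (subst s t), a, (subst s u).
Qed.

Lemma valid_proof_Neg_root {pt : ptree arity V A} {w g} :
  valid_proof P pt -> root pt = Neg w g -> pt = HypLeaf (Neg w g).
Proof.
  destruct 1 as [l | l I ch _ Hinst]; simpl; intros El; [now subst|].
  subst l; destruct (standard_rule_instance_Pos Hinst) as [t [a [u E]]].
  discriminate E.
Qed.

Lemma rule_instance_Neg_tau {K : literal arity V A -> Prop} {l w g} :
  rule_instance P K l -> K (Neg w g) -> K (Neg w (tau A)).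
Proof.
  intros [r [Pr [s [_ HK]]]] Kwg.
  apply HK in Kwg as [[t a u | w' g'] [Ph Eh]]; [discriminate Eh|].
  injection Eh as -> _.
  apply HK; exists (Neg w' (tau A)); split; [|reflexivity].
  exact (proj2 (P_negative_stable r Pr) w' g' Ph).
Qed.

Lemma hyp_label_Neg_tau {pt : ptree arity V A} {w g} :
  valid_proof P pt -> hyp_label pt (Neg w g) ->
  pt = HypLeaf (Neg w g) \/ hyp_label pt (Neg w (tau A)).
Proof.
  intros Hv Hl; remember (Neg w g) as k eqn:Ek.
  induction Hl as [l | l I ch i k Hk IH]; [now left; subst|].
  right; apply valid_proof_NodeP in Hv as [Hch Hinst].
  destruct (IH (Hch i) Ek) as [Ei | Hi]; [|now apply hl_node with i].
  subst k.
  destruct (rule_instance_Neg_tau Hinst (ex_intro _ i (f_equal _ Ei)))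
    as [j Hj].
  apply hl_node with j.
  rewrite (valid_proof_Neg_root (Hch j) Hj); constructor.
Qed.

End NegativeStability.

Theorem mainTheorem12 (F : Type) (arity : F -> nat) (V : Type) (A : Type)
  (V_infinite : forall l : list V, exists x : V, ~ In x l)
  (P : TSS arity V A) :
  standard_TSS P ->
  negative_stable_TSS P ->
  decent_ntytt_TSS P ->
  forall r : rule arity V A,
    standard_rule r -> ntytt_rule r -> irredundantly_provable P r ->
    negative_stable_rule r.
Proof.
  intros HS HN _ r Hr _ [pt [Hv [Hroot Hprem]]].
  split; [exact Hr|].
  intros w g Hwg; apply Hprem in Hwg.
  destruct (hyp_label_Neg_tau _ _ _ _ P HS HN Hv Hwg) as [-> | Htau];
    [|now apply Hprem].
  destruct Hr as [t [a [u Ec]]]; rewrite Ec in Hroot; discriminate Hroot.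
Qed.
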